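(* Let $G$ act cocompactly by cubical automorphisms on a CAT$(0)$ cube complex $X$, and let $\mathcal{Q}(G)$ be the collection of stabilizers in $G$ of cubes of $X$. There exists a finite set $F_1\subset\mathcal{Q}(G)\times G$ such that $p\notin Q$ for every $(Q,p)\in F_1$, and such that the following holds: if $K\trianglelefteq G$ is co-cubical and $p\notin QK$ for every $(Q,p)\in F_1$, then no link of a cube in $X/K$ contains an edge-loop of length $1$.
   Context: A normal subgroup $K\trianglelefteq G$ is co-cubical if the quotient $X/K$ is a cube complex. The link of a cube in a cube complex is a $\Delta$--complex with one simplex for each inclusion of the cube as a face of a higher-dimensional cube; an edge-loop of length $1$ is a $1$--cell whose two endpoints coincide. *)

From Stdlib Require Import List Relations.
Import ListNotations.
Set Implicit Arguments.

Record group := Group {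
  gcar :> Type;
  gmul : gcar -> gcar -> gcar;
  gone : gcar;
  ginv : gcar -> gcar;
  gmulA : forall x y z, gmul x (gmul y z) = gmul (gmul x y) z;
  gmul1 : forall x, gmul gone x = x;
  gmulV : forall x, gmul (ginv x) x = gone
}.

Definition normal_subgroup (G : group) (K : G -> Prop) : Prop :=
  K (gone G) /\
  (forall x y, K x -> K y -> K (gmul G x y)) /\
  (forall x, K x -> K (ginv G x)) /\
  (forall g x, K x -> K (gmul G (gmul G (ginv G g) x) g)).

(* The face poset of the standard n-cube [0,1]^n: a face is a word in
   {0,1,*}^n (None = free coordinate); f is a face of g iff f agrees with
   g on every coordinate that g fixes.                                  *)
Definition cface (n : nat) := { f : list (option bool) | length f = n }.

Definition cface_le n (f g : cface n) : Prop :=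
  Forall2 (fun a b => b = None \/ a = b) (proj1_sig f) (proj1_sig g).

Section Complex.
Variables (T : Type) (le : T -> T -> Prop).
(* T = the set of cubes, le C D = "C is a face of D". *)

Definition is_dim (D : T) (n : nat) : Prop :=
  exists (phi : { C | le C D } -> cface n) (psi : cface n -> { C | le C D }),
    (forall x, psi (phi x) = x) /\ (forall y, phi (psi y) = y) /\
    (forall x y, le (proj1_sig x) (proj1_sig y) <-> cface_le (phi x) (phi y)).

(* A cube complex with embedded cubes, encoded by its face poset. *)
Definition cube_poset : Prop :=
  (forall C, le C C) /\
  (forall C D, le C D -> le D C -> C = D) /\
  (forall C D E, le C D -> le D E -> le C E) /\
  (forall D, exists n, is_dim D n).

Definition vertex (v : T) := is_dim v 0.
Definition edge (e : T) := is_dim e 1.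

Definition adjacent (u w : T) : Prop :=
  vertex u /\ vertex w /\ u <> w /\ exists e, edge e /\ le u e /\ le w e.

Fixpoint is_path (p : list T) : Prop :=
  match p with
  | a :: ((b :: _) as q) => adjacent a b /\ is_path q
  | _ => True
  end.

(* elementary homotopies of edge paths: backtracking, and pushing across a square *)
Definition path_step (p q : list T) : Prop :=
  is_path p /\ is_path q /\
  ((exists l r a b, p = l ++ a :: b :: a :: r /\ q = l ++ a :: r) \/
   (exists l r a b c d S, p = l ++ a :: b :: c :: r /\ q = l ++ a :: d :: c :: r /\
      is_dim S 2 /\ le a S /\ le b S /\ le c S /\ le d S /\ a <> c /\ b <> d)).

Definition simply_connected : Prop :=
  (forall u w, vertex u -> vertex w ->
     exists p, is_path (u :: p) /\ last (u :: p) u = w) /\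
  (forall v p, vertex v -> is_path (v :: p) -> last (v :: p) v = v ->
     clos_refl_sym_trans _ path_step (v :: p) [v]).

(* Gromov's link condition: the link of every vertex is a flag simplicial complex *)
Definition link_simplicial (v : T) : Prop :=
  forall D D', le v D -> le v D' ->
    (forall e, edge e -> le v e -> (le e D <-> le e D')) -> D = D'.

Definition link_flag (v : T) : Prop :=
  forall es : list T,
    (forall e, In e es -> edge e /\ le v e) ->
    (forall e1 e2, In e1 es -> In e2 es -> exists D, le e1 D /\ le e2 D) ->
    exists D, forall e, In e es -> le e D.

Definition CAT0_cube_complex : Prop :=
  cube_poset /\ simply_connected /\
  (forall v, vertex v -> link_simplicial v /\ link_flag v).

End Complex.

Section Action.
Variables (T : Type) (le : T -> T -> Prop) (G : group) (act : G -> T -> T).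

Definition cubical_action : Prop :=
  (forall C, act (gone G) C = C) /\
  (forall g h C, act (gmul G g h) C = act g (act h C)) /\
  (forall g C D, le C D <-> le (act g C) (act g D)).

Definition cocompact : Prop :=
  exists L : list T, forall C, exists C0 g, In C0 L /\ act g C0 = C.

Definition stab (C : T) (g : G) : Prop := act g C = C.

Definition in_QK (K : G -> Prop) (C : T) (p : G) : Prop :=
  exists q k, stab C q /\ K k /\ p = gmul G q k.

(* X/K is a cube complex: every element of K stabilizing a cube fixes it
   pointwise, i.e. fixes each of its faces *)
Definition cocubical (K : G -> Prop) : Prop :=
  forall k C, K k -> stab C k -> forall D, le D C -> act k D = D.

Definition strict_face (C D : T) := le C D /\ C <> D.

(* Link in X/K of the image of the cube C (n = dim C).  Its 0-cells are the
   inclusions of [C] as a face of an (n+1)-cube, i.e. (n+1)-cubes D > C up to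
   Stab_K(C); its 1-cells are (n+2)-cubes E > C up to Stab_K(C), whose two
   endpoints are the two (n+1)-faces of E containing C.  An edge-loop of
   length 1 is a 1-cell whose endpoints coincide. *)
Definition link_vertex_eq (K : G -> Prop) (C D1 D2 : T) : Prop :=
  exists k, K k /\ stab C k /\ act k D1 = D2.

Definition quotient_link_has_loop1 (K : G -> Prop) (C : T) : Prop :=
  exists n E D1 D2,
    is_dim le C n /\ is_dim le E (S (S n)) /\
    is_dim le D1 (S n) /\ is_dim le D2 (S n) /\
    strict_face C D1 /\ strict_face D1 E /\
    strict_face C D2 /\ strict_face D2 E /\ D1 <> D2 /\
    link_vertex_eq K C D1 D2.

End Action.

From Stdlib Require Import List.
From Stdlib Require Import Classical ProofIrrelevance.
Import ListNotations.
Set Implicit Arguments.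

(* Cocompactness leaves finitely many orbit representatives of cubes, hence
   finitely many faces of representatives.  For every pair of distinct faces
   of representatives lying in one G-orbit, choose some p translating the
   first to the second; these pairs form F1.  A loop of length 1 in a link of
   X/K is a cube E with two distinct faces D1, D2 identified by some k in K.
   Translating E to its representative (K is normal) turns (D1, D2) into one
   of the chosen pairs, and then p lies in k Stab(D1) = Stab(D1) k' with k' in
   K, contradicting p notin Stab(D1) K. *)

Section GroupFacts.
Variable G : group.

Lemma gmulV_r (x : G) : gmul G x (ginv G x) = gone G.
Proof.
  rewrite <- (gmul1 G (gmul G x (ginv G x))).
  rewrite <- (gmulV G (ginv G x)) at 1.
  rewrite <- gmulA, (gmulA G (ginv G x) x), gmulV, gmul1. apply gmulV.
Qed.

Lemma gmul1_r (x : G) : gmul G x (gone G) = x.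
Proof. rewrite <- (gmulV G x), gmulA, gmulV_r. apply gmul1. Qed.

Lemma ginvK (x : G) : ginv G (ginv G x) = x.
Proof.
  rewrite <- (gmul1_r (ginv G (ginv G x))), <- (gmulV G x), gmulA, gmulV.
  apply gmul1.
Qed.

Lemma normal_conj_r (K : G -> Prop) (g k : G) :
  normal_subgroup G K -> K k -> K (gmul G (gmul G g k) (ginv G g)).
Proof.
  intros [_ [_ [_ HKconj]]] Kk.
  rewrite <- (ginvK g) at 1. apply HKconj, Kk.
Qed.

End GroupFacts.

Definition cface_cons n (a : option bool) (c : cface n) : cface (S n) :=
  exist _ (a :: proj1_sig c) (f_equal S (proj2_sig c)).

Fixpoint cface_enum (n : nat) : list (cface n) :=
  match n with
  | 0 => [exist _ [] eq_refl]
  | S m => flat_map (fun c => map (fun a => cface_cons a c) [None; Some true; Some false])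
                    (cface_enum m)
  end.

Lemma cface_eq n (x y : cface n) : proj1_sig x = proj1_sig y -> x = y.
Proof. destruct x, y; simpl; intros ->; f_equal; apply proof_irrelevance. Qed.

Lemma In_cface_enum n (c : cface n) : In c (cface_enum n).
Proof.
  induction n as [|n IH].
  - left. apply cface_eq. destruct c as [[|] h]; [reflexivity|discriminate].
  - destruct c as [[|a w] h]; [discriminate|].
    assert (hw : length w = n) by (injection h; auto).
    simpl. apply in_flat_map. exists (exist _ w hw). split; [apply IH|].
    assert (E : cface_cons a (exist _ w hw) = exist _ (a :: w) h)
      by (apply cface_eq; reflexivity).
    destruct a as [[|]|]; simpl; rewrite E; auto.
Qed.

Section FiniteFaces.
Variables (T : Type) (le : T -> T -> Prop).
Hypothesis has_dim : forall D, exists n, is_dim le D n.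

Lemma faces_finite (D : T) : exists fl : list T, forall C, le C D -> In C fl.
Proof.
  destruct (has_dim D) as [n [phi [psi [psiK _]]]].
  exists (map (fun c => proj1_sig (psi c)) (cface_enum n)).
  intros C HC. apply in_map_iff. exists (phi (exist _ C HC)).
  rewrite psiK. split; [reflexivity|apply In_cface_enum].
Qed.

Lemma faces_of_list_finite (L : list T) :
  exists fl : list T, forall E, In E L -> forall C, le C E -> In C fl.
Proof.
  induction L as [|E0 L [fl Hfl]].
  - exists []. intros _ [].
  - destruct (faces_finite E0) as [fl0 Hfl0].
    exists (fl0 ++ fl). intros E [<-|HE] C HC; apply in_or_app; auto.
    right. exact (Hfl E HE C HC).
Qed.

End FiniteFaces.

Section Action.
Variables (T : Type) (G : group) (act : G -> T -> T).

Lemma orbit_witnesses (pl : list (T * T)) :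
  exists F : list (T * G),
    (forall x, In x F -> ~ stab G act (fst x) (snd x)) /\
    forall d1 d2, In (d1, d2) pl -> d1 <> d2 -> (exists p, act p d1 = d2) ->
      exists p, In (d1, p) F /\ act p d1 = d2.
Proof.
  induction pl as [|[a b] pl [F [HF HFpl]]].
  - exists []. split; [intros _ []|intros d1 d2 []].
  - destruct (classic (a <> b /\ exists p, act p a = b)) as [[Hab [p Hp]]|Hn].
    + exists ((a, p) :: F). split.
      * intros x [<-|Hx]; [|exact (HF x Hx)].
        unfold stab; simpl. rewrite Hp. auto.
      * intros d1 d2 [[= -> ->]|Hin] Hd Hex; [exists p; split; [left|]; auto|].
        destruct (HFpl d1 d2 Hin Hd Hex) as [q [Hq Hqd]].
        exists q. split; [right|]; auto.
    + exists F. split; [exact HF|].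
      intros d1 d2 [[= -> ->]|Hin] Hd Hex; [tauto|auto].
Qed.

Variable le : T -> T -> Prop.

Definition folded_faces (K : G -> Prop) (E D1 D2 : T) : Prop :=
  le D1 E /\ le D2 E /\ D1 <> D2 /\ exists k, K k /\ act k D1 = D2.

Lemma loop1_folded_faces (K : G -> Prop) (C : T) :
  quotient_link_has_loop1 le G act K C -> exists E D1 D2, folded_faces K E D1 D2.
Proof.
  intros (_ & E & D1 & D2 & _ & _ & _ & _ & _ & [HD1E _] & _ & [HD2E _] & Hne & k & Kk & _ & Hk).
  exists E, D1, D2. repeat split; eauto.
Qed.

Hypothesis Hact : cubical_action le G act.

Lemma act_mul (g h : G) (x : T) : act (gmul G g h) x = act g (act h x).
Proof. apply Hact. Qed.

Lemma act_invK (g : G) (x : T) : act (ginv G g) (act g x) = x.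
Proof. rewrite <- act_mul, gmulV. apply Hact. Qed.

Lemma act_inj (g : G) (x y : T) : act g x = act g y -> x = y.
Proof. intros Hxy. rewrite <- (act_invK g x), Hxy. apply act_invK. Qed.

Lemma folded_faces_translate (K : G -> Prop) (g : G) (E D1 D2 : T) :
  normal_subgroup G K -> folded_faces K E D1 D2 ->
  folded_faces K (act g E) (act g D1) (act g D2).
Proof.
  intros HK (HD1E & HD2E & Hne & k & Kk & Hk).
  repeat split.
  - apply Hact, HD1E.
  - apply Hact, HD2E.
  - intros Heq. apply Hne, (act_inj Heq).
  - exists (gmul G (gmul G g k) (ginv G g)). split; [apply normal_conj_r; assumption|].
    rewrite !act_mul, act_invK, Hk. reflexivity.
Qed.

(* p = k s with s := k^-1 p in Stab(x), and k s = s (s^-1 k s). *)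
Lemma in_QK_of_common_image (K : G -> Prop) (x : T) (p k : G) :
  normal_subgroup G K -> K k -> act p x = act k x -> in_QK G act K x p.
Proof.
  intros HK Kk Hpk. pose proof HK as (_ & _ & _ & HKconj).
  set (s := gmul G (ginv G k) p).
  exists s, (gmul G (gmul G (ginv G s) k) s). split; [|split].
  - unfold stab, s. rewrite act_mul, Hpk. apply act_invK.
  - apply HKconj, Kk.
  - rewrite !gmulA, gmulV_r, gmul1. unfold s.
    rewrite gmulA, gmulV_r, gmul1. reflexivity.
Qed.

End Action.

Theorem theorem5p6 (T : Type) (le : T -> T -> Prop) (G : group) (act : G -> T -> T)
  (HX : CAT0_cube_complex le) (Hact : cubical_action le G act) (Hcoc : cocompact G act) :
  exists F1 : list (T * G),
    (forall Cp, In Cp F1 -> ~ stab G act (fst Cp) (snd Cp)) /\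
    forall K : G -> Prop, normal_subgroup G K -> cocubical le G act K ->
      (forall Cp, In Cp F1 -> ~ in_QK G act K (fst Cp) (snd Cp)) ->
      forall C : T, ~ quotient_link_has_loop1 le G act K C.
Proof.
  destruct HX as [(_ & _ & _ & has_dim) _].
  destruct Hcoc as [L HL].
  destruct (faces_of_list_finite has_dim L) as [fl Hfl].
  destruct (orbit_witnesses G act (list_prod fl fl)) as [F1 [HF1 HF1pairs]].
  exists F1. split; [exact HF1|].
  intros K HK _ HF1K C Hloop.
  destruct (loop1_folded_faces Hloop) as (E & D1 & D2 & Hfold).
  destruct (HL E) as (E0 & g & HE0 & <-).
  pose proof (folded_faces_translate Hact (ginv G g) HK Hfold) as Hfold0.
  rewrite (act_invK Hact) in Hfold0.
  destruct Hfold0 as (H1 & H2 & Hne & k & Kk & Hk).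
  destruct (HF1pairs _ _ (in_prod _ _ _ _ (Hfl _ HE0 _ H1) (Hfl _ HE0 _ H2)) Hne
              (ex_intro _ k Hk)) as (p & Hp & Hpk).
  apply (HF1K _ Hp). simpl.
  apply (in_QK_of_common_image Hact _ _ _ HK Kk). congruence.
Qed.
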